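(* Let $p$ be an odd prime and let $m,k$ be positive integers such that $m/\gcd(m,k)$ is odd. For $x,y\in\mathbb{F}_{p^m}$ put $x\circ_k y=x^{p^k}y+y^{p^k}x$. Let $\alpha$ be a non-square element of $\mathbb{F}_{p^m}$ and $\sigma$ a field automorphism of $\mathbb{F}_{p^m}$. For $(a,b),(c,d)\in\mathbb{F}_{p^m}^2$ define $$(a,b)*(c,d)=\big(a\circ_k c+\alpha\,\sigma(b\circ_k d),\ ad+bc\big).$$ Then $(\mathbb{F}_{p^m}^2,+,* )$ (with componentwise addition, i.e. the additive group of $\mathbb{F}_{p^{2m}}$) is a presemifield.
   Context: A (finite) presemifield is a finite set with an addition making it an abelian group and a multiplication $*$ satisfying both distributive laws $(a+b)*c=a*c+b*c$, $a*(b+c)=a*b+a*c$, and such that $x*y=0$ implies $x=0$ or $y=0$ (equivalently, for nonzero elements the left and right multiplication maps are bijective); a multiplicative identity is not required. *)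

From HB Require Import structures.
From mathcomp Require Import all_boot all_order all_algebra all_field.
Set Implicit Arguments. Unset Strict Implicit. Unset Printing Implicit Defensive.
Import GRing.Theory.
Local Open Scope ring_scope.

Definition is_presemifield (T : zmodType) (mul : T -> T -> T) : Prop :=
  [/\ forall a b c : T, mul (a + b) c = mul a c + mul b c,
      forall a b c : T, mul a (b + c) = mul a b + mul a c &
      forall x y : T, mul x y = 0 -> x = 0 \/ y = 0].

Definition circk (F : fieldType) (p k : nat) (x y : F) : F :=
  x ^+ (p ^ k) * y + y ^+ (p ^ k) * x.

Definition starmul (F : fieldType) (p k : nat) (alpha : F) (sigma : F -> F)
  (u v : F * F) : F * F :=
  (circk p k u.1 v.1 + alpha * sigma (circk p k u.2 v.2), u.1 * v.2 + u.2 * v.1).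

From HB Require Import structures.
From mathcomp Require Import all_boot all_order all_algebra all_field.
From mathcomp Require Import ring.
Set Implicit Arguments.
Unset Strict Implicit.
Unset Printing Implicit Defensive.

Import GRing.Theory.
Local Open Scope ring_scope.

(* Both distributive laws hold because x |-> x ^ (p ^ k) is additive in
   characteristic p. Put q = p ^ k. Since m / gcd(m, k) is odd, t ^ q = - t
   forces t = 0; hence for c <> 0, writing a = u c, a o_k c = c ^ (q + 1) (u ^ q + u)
   vanishes only when a = 0, which settles the products in which c or d is zero. Otherwise a d + b c = 0 gives (a, b) = (- u c, u d), and the first
   coordinate becomes - c ^ (q + 1) s + alpha sigma (d ^ (q + 1) s) with
   s = u ^ q + u. If s <> 0, the quadratic character chi z = z ^ ((#|F| - 1) / 2)
   yields a contradiction: c ^ (q + 1) and d ^ (q + 1) are squares as q is odd,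
   chi commutes with sigma, and chi alpha = -1, so chi s = - chi s. *)

Lemma two_neq0_pchar (R : idomainType) (p : nat) :
  p \in [pchar R] -> odd p -> (2 : R) != 0.
Proof.
move=> charRp odd_p; rewrite natf_neq0_pchar (pnatE _ (isT : prime 2)) inE /=.
by rewrite (pcharf_eq charRp); apply: contraL odd_p => /eqP <-.
Qed.

Lemma eqrN_eq0 (R : idomainType) (x : R) : (2 : R) != 0 -> (x == - x) = (x == 0).
Proof.
by move=> two_neq0; rewrite -addr_eq0 -mulr2n -mulr_natl mulf_eq0 (negbTE two_neq0).
Qed.

Lemma expr_odd_mulr_sqr (R : pzSemiRingType) (x : R) (n : nat) :
  odd n -> x ^+ n * x = (x ^+ n.+1./2) ^+ 2.
Proof. by move=> odd_n; rewrite -exprSr -exprM muln2 even_halfK //= odd_n. Qed.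

Section QuadraticCharacter.

Variable F : finFieldType.
Hypothesis oddF : odd #|F|.

(* z ^+ h is the quadratic character of z (Euler's criterion). *)
Let h := #|F|./2.

Lemma expf_card_pred (z : F) : z != 0 -> z ^+ #|F|.-1 = 1.
Proof.
move=> z0; apply: (mulfI z0); rewrite mulr1 -exprS prednK ?expf_card //.
exact: ltnW (finNzRing_gt1 F).
Qed.

Lemma expf_sqr_half (z : F) : z != 0 -> (z ^+ 2) ^+ h = 1.
Proof. by move=> z0; rewrite -exprM mulnC muln2 /h odd_halfK ?expf_card_pred. Qed.

Lemma expf_half_sign (z : F) : z != 0 -> (z ^+ h == 1) || (z ^+ h == -1).
Proof.
by move=> z0; rewrite -sqrf_eq1 -exprM mulnC exprM (expf_sqr_half z0).
Qed.

Definition nonzero_sqr : {set F} := [set x ^+ 2 | x in [set~ 0]].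

Lemma card_nonzero_sqr : (h <= #|nonzero_sqr|)%N.
Proof.
rewrite -(leq_pmul2r (isT : (0 < 2)%N)) !muln2 /h odd_halfK //.
rewrite -(cardsC1 (0 : F)) -sum1_card.
rewrite (partition_big (fun x => x ^+ 2) (mem nonzero_sqr)); last first.
  by move=> x x0; apply/imsetP; exists x.
rewrite -sum1_card -muln2 big_distrl /= leq_sum // => _ /imsetP[x _ ->].
rewrite mul1n sum1dep_card; apply: leq_trans (_ : #|[set x; - x]| <= 2)%N.
  by apply/subset_leq_card/subsetP => y; rewrite !inE eqf_sqr => /andP[].
by rewrite cards2; case: (_ != _).
Qed.

Lemma card_unity_half : (#|[set z : F | z ^+ h == 1%R]| <= h)%N.
Proof.
rewrite cardE; apply: max_unity_roots; last exact: enum_uniq.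
- rewrite lt0n; apply: contraTneq (finNzRing_gt1 F) => h0.
  by rewrite -(odd_double_half #|F|) oddF -/h h0.
- by apply/allP => z; rewrite mem_enum inE unity_rootE.
Qed.

Lemma sqr_of_expf_half (y : F) : y ^+ h = 1 -> exists x, x ^+ 2 = y.
Proof.
move=> yh; have sqr_unity : nonzero_sqr \subset [set z : F | z ^+ h == 1].
  apply/subsetP => _ /imsetP[x x0 ->].
  by rewrite inE expf_sqr_half //; move: x0; rewrite !inE.
have card_eq : #|nonzero_sqr| = #|[set z : F | z ^+ h == 1]|.
  apply/anti_leq; rewrite subset_leq_card //.
  exact: leq_trans card_unity_half card_nonzero_sqr.
have : y \in nonzero_sqr by rewrite ((subset_cardP card_eq) sqr_unity) inE yh.
by case/imsetP=> x _ ->; exists x.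
Qed.

Lemma expf_half_nonsqr (a : F) : ~ (exists y, y ^+ 2 = a) -> a ^+ h = -1.
Proof.
move=> nsq; have a0 : a != 0.
  by apply: contra_notN nsq => /eqP->; exists 0; rewrite expr0n.
by case/orP: (expf_half_sign a0) => /eqP // /sqr_of_expf_half.
Qed.

Lemma expf_half_rmorph (sigma : {rmorphism F -> F}) (x : F) :
  sigma x ^+ h = x ^+ h.
Proof.
have [->|x0] := eqVneq x 0; first by rewrite rmorph0.
rewrite -rmorphXn.
by case/orP: (expf_half_sign x0) => /eqP->; rewrite ?rmorph1 ?rmorphN1.
Qed.

Lemma sqr_mul_neq_nonsqr_rmorph (sigma : {rmorphism F -> F}) (a z w x : F) :
  (2 : F) != 0 -> ~ (exists y, y ^+ 2 = a) -> z != 0 -> x != 0 ->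
  z ^+ 2 * x != a * sigma (w ^+ 2 * x).
Proof.
move=> two_neq0 nsq z0 x0; apply/eqP => E.
have w0 : w != 0.
  apply: contraTneq isT => w0.
  move/eqP: E; rewrite w0 expr0n /= mul0r rmorph0 mulr0.
  by rewrite mulf_eq0 expf_eq0 (negbTE z0) (negbTE x0).
have := congr1 (fun y => y ^+ h) E.
rewrite /= exprMn (expf_sqr_half z0) mul1r exprMn expf_half_rmorph exprMn.
rewrite (expf_sqr_half w0) (expf_half_nonsqr nsq) mul1r mulN1r => /eqP.
by rewrite eqrN_eq0 // expf_eq0 (negbTE x0) andbF.
Qed.

End QuadraticCharacter.

Lemma expr_iter_eigen (R : comNzRingType) (t e : R) (n : nat) :
  t ^+ n = e * t -> e ^+ n = e -> forall j, t ^+ (n ^ j) = e ^+ j * t.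
Proof.
move=> tn en; elim=> [|j IHj]; first by rewrite expn0 expr1 expr0 mul1r.
by rewrite expnSr exprM IHj exprMn tn -exprM mulnC exprM en exprSr mulrA.
Qed.

Lemma signr_oddX (R : nzRingType) (i n : nat) :
  odd n -> ((-1) ^+ i : R) ^+ n = (-1) ^+ i.
Proof. by move=> odd_n; rewrite -exprM mulnC exprM -(signr_odd _ n) odd_n expr1. Qed.

(* Bezout for g = gcd(k, m) gives t ^+ (n ^ g) = e * t with e = +-1; as m / g
   is odd, t ^+ (n ^ m) = t forces e = 1, and then t ^+ (n ^ k) = t. *)
Lemma expr_antifixed_eq0 (F : fieldType) (n m k : nat) (t : F) :
  (2 : F) != 0 -> odd n -> (0 < k)%N -> odd (m %/ gcdn m k) ->
  t ^+ (n ^ m) = t -> t ^+ (n ^ k) = - t -> t = 0.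
Proof.
move=> two_neq0 odd_n k_gt0 odd_mg tm tk.
have odd_nX j : odd (n ^ j) by rewrite oddX odd_n orbT.
have tkj := expr_iter_eigen (etrans tk (esym (mulN1r t))) (signr_oddX F 1 (odd_nX k)).
have tmj := expr_iter_eigen (etrans tm (esym (mul1r t))) (expr1n _ (n ^ m)).
case: (egcdnP m k_gt0) => km kn Bezout _.
set g := gcdn k m in Bezout; set e : F := (-1) ^+ km.
have tg : t ^+ (n ^ g) = e * t.
  have := tkj km; rewrite -expnM mulnC Bezout expnD (mulnC kn) expnM exprM tmj.
  by rewrite expr1n mul1r => <-.
have tgj := expr_iter_eigen tg (signr_oddX F km (odd_nX g)).
have [g_m g_k] : (g %| m)%N /\ (g %| k)%N by rewrite dvdn_gcdr dvdn_gcdl.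
apply/eqP; apply: contraT => t0.
have e1 : e = 1.
  apply: (mulIf t0); rewrite mul1r /e -{1}(signr_oddX F km (_ : odd (m %/ g))).
    by rewrite -tgj -expnM mulnC divnK.
  by rewrite /g gcdnC.
suff : t == - t by rewrite eqrN_eq0 // (negbTE t0).
by rewrite -tk -(divnK g_k) mulnC expnM tgj e1 expr1n mul1r.
Qed.

Section TwistedProduct.

Variables (F : fieldType) (p k : nat).

Local Notation q := (p ^ k)%N.

Lemma circk_mull (t c : F) : circk p k (t * c) c = c ^+ q * c * (t ^+ q + t).
Proof. by rewrite /circk exprMn; ring. Qed.

Lemma circk_eq0 (a c : F) : (forall t : F, t ^+ q = - t -> t = 0) ->
  c != 0 -> circk p k a c = 0 -> a = 0.
Proof.
move=> antifixed c0; rewrite -(divfK c0 a) circk_mull => /eqP.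
rewrite !mulf_eq0 expf_eq0 (negbTE c0) andbF /= addr_eq0 => /eqP/antifixed ->.
by rewrite mul0r.
Qed.

Hypothesis charFp : p \in [pchar F].

Let frobD (x y : F) : (x + y) ^+ q = x ^+ q + y ^+ q.
Proof. by rewrite exprDn_pchar // pnatX (pnatE _ (pcharf_prime charFp)) charFp. Qed.

Let frobN (x : F) : (- x) ^+ q = - x ^+ q.
Proof. by rewrite exprNn_pchar // pnatX (pnatE _ (pcharf_prime charFp)) charFp. Qed.

Lemma circkDl (a b c : F) : circk p k (a + b) c = circk p k a c + circk p k b c.
Proof. by rewrite /circk frobD; ring. Qed.

Lemma circkDr (a b c : F) : circk p k a (b + c) = circk p k a b + circk p k a c.
Proof. by rewrite /circk frobD; ring. Qed.

Lemma circkNl (a c : F) : circk p k (- a) c = - circk p k a c.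
Proof. by rewrite /circk frobN; ring. Qed.

Lemma circkr0 (a : F) : circk p k a 0 = 0.
Proof.
have q_neq0 : (q == 0)%N = false.
  by rewrite expn_eq0 eqn0Ngt prime_gt0 ?(pcharf_prime charFp).
by rewrite /circk expr0n q_neq0 mulr0 mul0r addr0.
Qed.

Variables (alpha : F) (sigma : {rmorphism F -> F}).

Lemma starmulDl (u v w : F * F) : starmul p k alpha sigma (u + v) w =
  starmul p k alpha sigma u w + starmul p k alpha sigma v w.
Proof.
case: u v w => [a b] [c d] [e f]; rewrite /starmul /=; congr pair.
  by rewrite !circkDl rmorphD /=; ring.
by rewrite /=; ring.
Qed.

Lemma starmulDr (u v w : F * F) : starmul p k alpha sigma u (v + w) =
  starmul p k alpha sigma u v + starmul p k alpha sigma u w.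
Proof.
case: u v w => [a b] [c d] [e f]; rewrite /starmul /=; congr pair.
  by rewrite !circkDr rmorphD /=; ring.
by rewrite /=; ring.
Qed.

End TwistedProduct.

Section NoZeroDivisors.

Variables (F : finFieldType) (p k : nat) (alpha : F) (sigma : {rmorphism F -> F}).
Hypotheses (charFp : p \in [pchar F]) (odd_p : odd p) (odd_F : odd #|F|).
Hypothesis antifixed : forall t : F, t ^+ (p ^ k) = - t -> t = 0.
Hypothesis alpha_nonsq : ~ exists y, y ^+ 2 = alpha.

Lemma starmul_eq0 (u v : F * F) :
  starmul p k alpha sigma u v = 0 -> u = 0 \/ v = 0.
Proof.
case: u v => [a b] [c d] /= E.
have [E1 E2] : circk p k a c + alpha * sigma (circk p k b d) = 0
              /\ a * d + b * c = 0 by case: E.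
have alpha0 : alpha != 0.
  by apply: contra_notN alpha_nonsq => /eqP->; exists 0; rewrite expr0n.
have [c0 | c0] := eqVneq c 0.
  rewrite c0 circkr0 // add0r in E1; rewrite c0 mulr0 addr0 in E2; rewrite c0.
  have [-> | d0] := eqVneq d 0; [by right | left].
  move/eqP: E2; rewrite mulf_eq0 (negbTE d0) orbF => /eqP ->.
  move/eqP: E1; rewrite mulf_eq0 (negbTE alpha0) fmorph_eq0 => /eqP.
  by move/(circk_eq0 antifixed d0) ->.
have [d0 | d0] := eqVneq d 0.
  rewrite d0 circkr0 // rmorph0 mulr0 addr0 in E1.
  rewrite d0 mulr0 add0r in E2; left.
  move/eqP: E2; rewrite mulf_eq0 (negbTE c0) orbF => /eqP ->.
  by rewrite (circk_eq0 antifixed c0 E1).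
left; set u := b / d.
have bE : b = u * d by rewrite divfK.
have aE : a = - (u * c).
  apply/eqP; rewrite -addr_eq0; apply/eqP/(mulIf d0).
  by rewrite mul0r -E2 bE; ring.
have [s0 | s0] := eqVneq (u ^+ (p ^ k) + u) 0.
  have u0 : u = 0 by apply: antifixed; apply/eqP; rewrite -addr_eq0 s0.
  by rewrite aE bE u0 !mul0r oppr0.
have odd_q : odd (p ^ k) by rewrite oddX odd_p orbT.
have two_neq0 := two_neq0_pchar charFp odd_p.
move/eqP: E1; rewrite aE bE circkNl // !circk_mull !expr_odd_mulr_sqr //.
rewrite addrC subr_eq0 eq_sym; apply: contraTeq => _.
by rewrite sqr_mul_neq_nonsqr_rmorph ?expf_neq0.
Qed.

End NoZeroDivisors.

Theorem theorem1 (F : finFieldType) (p m k : nat) (alpha : F)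
  (sigma : {rmorphism F -> F}) :
  prime p -> odd p -> p \in [pchar F] -> #|F| = (p ^ m)%N ->
  (0 < m)%N -> (0 < k)%N -> odd (m %/ gcdn m k) ->
  ~ (exists y : F, y ^+ 2 = alpha) ->
  bijective sigma ->
  is_presemifield (starmul p k alpha sigma).
Proof.
move=> _ odd_p charFp cardF _ k_gt0 odd_mg alpha_nonsq _.
have odd_F : odd #|F| by rewrite cardF oddX odd_p orbT.
have two_neq0 := two_neq0_pchar charFp odd_p.
have frob_m (t : F) : t ^+ (p ^ m) = t by rewrite -cardF expf_card.
have antifixed (t : F) := expr_antifixed_eq0 two_neq0 odd_p k_gt0 odd_mg (frob_m t).
split; [exact: starmulDl | exact: starmulDr | exact: starmul_eq0].
Qed.
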